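(* Let $Q\ge2$ be an integer, let $i$ be any integer, and let $k\ge3$. Then \[ \begin{pmatrix}\nu_{k-1}(\gamma_i)&\nu_k(\gamma_i)\\ \nu_{k-2}(\gamma_{i+1})&\nu_{k-1}(\gamma_{i+1})\end{pmatrix}\in SL_2(\mathbb{Z}), \] i.e. $\nu_{k-1}(\gamma_i)\nu_{k-1}(\gamma_{i+1})-\nu_k(\gamma_i)\nu_{k-2}(\gamma_{i+1})=1$.
   Context: For $Q\in\mathbb{N}$, the Farey fractions of order $Q$ are $\mathcal{F}_Q=\{a/q\in\mathbb{Q}: 1\le q\le Q,\ 0<a\le q,\ \gcd(a,q)=1\}$. Write $\mathcal{F}_Q=\{\gamma_1,\ldots,\gamma_{N(Q)}\}$ with $1/Q=\gamma_1<\cdots<\gamma_{N(Q)}=1$, and extend to all $i\in\mathbb{Z}$ by $\gamma_{i+N(Q)}=\gamma_i+1$. Write $\gamma_i=p_i/q_i$ in lowest terms with $q_i>0$. For a positive integer $k$, $\nu_k(\gamma_i)=p_{i+k-1}q_{i-1}-p_{i-1}q_{i+k-1}$ (so $\nu_1\equiv1$). *)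

From mathcomp Require Import all_boot all_order all_algebra.
Set Implicit Arguments. Unset Strict Implicit. Unset Printing Implicit Defensive.
Import Order.TTheory GRing.Theory Num.Theory.
Local Open Scope ring_scope.

Definition farey (Q : nat) : seq rat :=
  sort <=%R [seq ((a%:Z)%:~R / (q%:Z)%:~R : rat)
            | q <- iota 1 Q, a <- [seq a <- iota 1 q | coprime a q]].

Definition farey_N (Q : nat) : nat := size (farey Q).

(* gamma_i for i : int, 1-based (gamma_1 = 1/Q, gamma_N = 1),
   extended by gamma_{i+N} = gamma_i + 1. *)
Definition gamma (Q : nat) (i : int) : rat :=
  let N := (farey_N Q)%:Z in
  nth 0 (farey Q) `|((i - 1) %% N)%Z|%N + (((i - 1) %/ N)%Z)%:~R.

Definition fp (Q : nat) (i : int) : int := numq (gamma Q i).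
Definition fq (Q : nat) (i : int) : int := denq (gamma Q i).

Definition nu (Q : nat) (k : nat) (i : int) : int :=
  fp Q (i + k%:Z - 1) * fq Q (i - 1) - fp Q (i - 1) * fq Q (i + k%:Z - 1).

From mathcomp Require Import all_boot all_order all_algebra.
From mathcomp Require Import zify ring.
Import Order.TTheory GRing.Theory Num.Theory.
Local Open Scope ring_scope.

(* Write [qdet x y := p_y q_x - p_x q_y], so that
   [nu k i = qdet gamma_(i-1) gamma_(i+k-1)].  The claimed determinant is the
   three-term Plucker relation for [qdet] on gamma_(i-1), gamma_i, gamma_(i+k-2),
   gamma_(i+k-1), whose right-hand side is a product of two [qdet]s of
   neighbours; so it suffices that neighbours x < y of the Farey sequence have
   [qdet x y = 1].  By Bezout there is z > x with [qdet x z = 1], [q_z <= Q] and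
   [q_x + q_z > Q].  Such z cannot lie strictly between x and y, and if y < z
   the identity [q_y = qdet x y * q_z + qdet y z * q_x] would give [q_y > Q];
   hence y = z.  Translation by integers preserves [qdet], which reduces the
   wrap-around pair (1, gamma_1 + 1) to the neighbours 0 < gamma_1. *)

Definition qdet (x y : rat) : int := numq y * denq x - numq x * denq y.

Lemma qdet_gt0 x y : (0 < qdet x y) = (x < y).
Proof. by rewrite subr_gt0 -lt_ratE. Qed.

Lemma qdet_plucker a b c d :
  qdet a c * qdet b d - qdet a d * qdet b c = qdet a b * qdet c d.
Proof. rewrite /qdet; ring. Qed.

Lemma qdet_den_split x y z :
  denq y * qdet x z = qdet x y * denq z + qdet y z * denq x.
Proof. rewrite /qdet; ring. Qed.

Lemma numq_denq_frac (X Y : int) : 0 < Y -> coprimez X Y ->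
  numq (X%:~R / Y%:~R) = X /\ denq (X%:~R / Y%:~R) = Y.
Proof.
move=> Y_gt0 coXY; split; first by rewrite coprimeq_num // gtr0_sg // mul1r.
by rewrite coprimeq_den // gt_eqF // gtr0_norm.
Qed.

Lemma numq_denq_addz x (m : int) :
  numq (x + m%:~R) = numq x + m * denq x /\ denq (x + m%:~R) = denq x.
Proof.
have -> : x + m%:~R = (numq x + m * denq x)%:~R / (denq x)%:~R.
  by rewrite rmorphD rmorphM /= mulrDl mulfK ?intr_eq0 ?denq_neq0 // divq_num_den.
apply: numq_denq_frac; first exact: denq_gt0.
have /coprimezP [[u v] /= Huv] := coprime_num_den x.
by apply/coprimezP; exists (u, v - u * m) => /=; rewrite -Huv; ring.
Qed.

Lemma qdet_addz x y (m : int) : qdet (x + m%:~R) (y + m%:~R) = qdet x y.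
Proof.
have [nx dx] := numq_denq_addz x m; have [ny dy] := numq_denq_addz y m.
by rewrite /qdet nx dx ny dy; ring.
Qed.

Lemma bezout_den_window (a b Q : int) : 0 < b -> coprimez a b ->
  exists X Y, b * X - a * Y = 1 /\ Q - b < Y <= Q.
Proof.
move=> b_gt0 /coprimezP [[u v] /= Huv].
have Qu_eq := divz_eq (Q + u) b.
have r_ge0 : 0 <= ((Q + u) %% b)%Z by rewrite modz_ge0 ?gt_eqF.
have r_ltb : ((Q + u) %% b)%Z < b by apply: ltz_pmod.
set t := ((Q + u) %/ b)%Z in Qu_eq; set r := ((Q + u) %% b)%Z in Qu_eq r_ge0 r_ltb.
exists (v + t * a), (Q - r); split; [nia | lia].
Qed.

Lemma exists_qdet1_den_window (Q : int) x : denq x <= Q ->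
  exists z, [/\ qdet x z = 1, Q < denq x + denq z & denq z <= Q].
Proof.
move=> dxQ; have dx_gt0 := denq_gt0 x.
have [X [Y [bezXY /andP[YQ_gt YQ_le]]]] :=
  bezout_den_window (numq x) (denq x) Q dx_gt0 (coprime_num_den x).
have Y_gt0 : 0 < Y by lia.
have coXY : coprimez X Y by apply/coprimezP; exists (denq x, - numq x) => /=; lia.
have [nz dz] := numq_denq_frac X Y Y_gt0 coXY.
by exists (X%:~R / Y%:~R); rewrite /qdet nz dz; split; lia.
Qed.

Lemma qdet_adjacent (Q : int) x y : x < y -> denq x <= Q -> denq y <= Q ->
  (forall z, x < z -> z < y -> Q < denq z) -> qdet x y = 1.
Proof.
move=> xy dxQ dyQ gap.
have [z [xz1 window dzQ]] := exists_qdet1_den_window _ _ dxQ.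
have xz : x < z by rewrite -qdet_gt0 xz1.
have yz : y <= z by rewrite leNgt; apply/negP => /(gap z xz); rewrite ltNge dzQ.
have [-> // | y_ne_z] := eqVneq y z.
have qxy_gt0 : 0 < qdet x y by rewrite qdet_gt0.
have qyz_gt0 : 0 < qdet y z by rewrite qdet_gt0 lt_neqAle y_ne_z.
have := qdet_den_split x y z; rewrite xz1 mulr1.
have := denq_gt0 x; have := denq_gt0 z; nia.
Qed.

Lemma mem_farey Q r : (r \in farey Q) = [&& 0 < r, r <= 1 & denq r <= Q%:Z].
Proof.
rewrite /farey mem_sort; apply/allpairsPdep/idP.
  move=> [q [a [q_in a_in ->]]].
  rewrite mem_iota in q_in; rewrite mem_filter mem_iota in a_in.
  case/andP: a_in => co_aq /andP[a_ge1 a_leq].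
  have q_gt0 : 0 < q%:Z by rewrite ltz_nat; lia.
  have [na da] := numq_denq_frac (a%:Z) (q%:Z) q_gt0 co_aq.
  rewrite -[(a%:Z)%:~R / _]divq_num_den na da; apply/and3P; split.
  - by rewrite divr_gt0 // ltr0z; lia.
  - by rewrite ler_pdivrMr ?ltr0z // mul1r ler_int; lia.
  - by rewrite da; lia.
case/and3P => r_gt0 + rQ; rewrite -[r <= 1]/(le_rat r 1) le_ratE mul1r mulr1 => r_le1.
rewrite -numq_gt0 in r_gt0; have r_den_gt0 := denq_gt0 r.
exists `|denq r|%N, `|numq r|%N; split.
- by rewrite mem_iota; lia.
- by rewrite mem_filter mem_iota coprime_num_den /=; lia.
- by rewrite !gtz0_abs // divq_num_den.
Qed.

Lemma farey_uniq Q : uniq (farey Q).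
Proof.
rewrite sort_uniq; apply: allpairs_uniq_dep => [||[q1 a1] [q2 a2]].
- exact: iota_uniq.
- by move=> q _; rewrite filter_uniq // iota_uniq.
move=> /allpairsPdep [q1' [a1' [q1_in a1_in [-> ->]]]].
move=> /allpairsPdep [q2' [a2' [q2_in a2_in [-> ->]]]] /= E.
rewrite !mem_filter !mem_iota in q1_in q2_in a1_in a2_in.
case/andP: a1_in => co1 _; case/andP: a2_in => co2 _.
have q1_gt0 : 0 < q1'%:Z by rewrite ltz_nat; lia.
have q2_gt0 : 0 < q2'%:Z by rewrite ltz_nat; lia.
have [n1 d1] := numq_denq_frac (a1'%:Z) (q1'%:Z) q1_gt0 co1.
have [n2 d2] := numq_denq_frac (a2'%:Z) (q2'%:Z) q2_gt0 co2.
by rewrite E n2 in n1; rewrite E d2 in d1; case: n1 => ->; case: d1 => ->.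
Qed.

Section FareyOrder.

Variable Q : nat.
Hypothesis Q_gt0 : (0 < Q)%N.
Local Notation F := (farey Q).
Local Notation N := (size (farey Q)).

Lemma farey_nth_le i j : (i <= j < N)%N -> nth 0 F i <= nth 0 F j.
Proof.
move=> /andP[ij jN]; apply: (sorted_leq_nth le_trans lexx) => //.
- exact/sort_sorted/le_total.
- by rewrite inE (leq_ltn_trans ij jN).
Qed.

Lemma farey_nth_index_le z j : z \in F -> (j < N)%N ->
  (index z F <= j)%N -> z <= nth 0 F j.
Proof. by move=> zF jN zj; rewrite -(nth_index 0 zF) farey_nth_le ?zj. Qed.

Lemma farey_nth_le_index z j : z \in F -> (j <= index z F)%N -> nth 0 F j <= z.
Proof.
by move=> zF jz; rewrite -[leRHS](nth_index 0 zF) farey_nth_le ?jz ?index_mem.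
Qed.

Lemma farey_1 : (1 : rat) \in F.
Proof. by rewrite mem_farey ltr01 lexx (denq_int 1) /=; lia. Qed.

Lemma farey_size_gt0 : (0 < N)%N.
Proof. by case: F farey_1. Qed.

Lemma farey_nth_mem [j] : (j < N)%N ->
  [&& 0 < nth 0 F j, nth 0 F j <= 1 & denq (nth 0 F j) <= Q%:Z].
Proof. by move=> jN; rewrite -mem_farey mem_nth. Qed.

Lemma farey_last : nth 0 F N.-1 = 1.
Proof.
have lastN : (N.-1 < N)%N by rewrite prednK ?farey_size_gt0.
apply/eqP; rewrite eq_le; case/and3P: (farey_nth_mem lastN) => _ -> _ /=.
apply: farey_nth_index_le; rewrite ?farey_1 //.
by rewrite -ltnS prednK ?farey_size_gt0 ?index_mem ?farey_1.
Qed.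

Lemma qdet_farey_succ j : (j.+1 < N)%N -> qdet (nth 0 F j) (nth 0 F j.+1) = 1.
Proof.
move=> jN; have jN' := ltnW jN.
case/and3P: (farey_nth_mem jN') => x_gt0 _ dxQ.
case/and3P: (farey_nth_mem jN) => _ y_le1 dyQ.
apply: (qdet_adjacent Q%:Z) => // [|z xz zy]; last first.
  rewrite ltNge; apply/negP => dzQ.
  have zF : z \in F by rewrite mem_farey (lt_trans x_gt0 xz) (le_trans (ltW zy) y_le1).
  have [zj | jz] := leqP (index z F) j.
    by move: xz; rewrite ltNge farey_nth_index_le.
  by move: zy; rewrite ltNge farey_nth_le_index.
rewrite lt_neqAle farey_nth_le ?jN ?leqnSn // andbT.
by rewrite (nth_uniq 0 jN' jN (farey_uniq Q)) ltn_eqF.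
Qed.

Lemma qdet0_farey_head : qdet 0 (nth 0 F 0) = 1.
Proof.
case/and3P: (farey_nth_mem farey_size_gt0) => h_gt0 h_le1 dhQ.
apply: (qdet_adjacent Q%:Z) => // z z_gt0 zh.
rewrite ltNge; apply/negP => dzQ.
have zF : z \in F by rewrite mem_farey z_gt0 (le_trans (ltW zh) h_le1).
by move: zh; rewrite ltNge farey_nth_le_index.
Qed.

End FareyOrder.

Lemma gamma_nth_addz Q (r : nat) (q : int) : (r < farey_N Q)%N ->
  gamma Q (r%:Z + 1 + q * (farey_N Q)%:Z) = nth 0 (farey Q) r + q%:~R.
Proof.
move=> rN; rewrite /gamma (_ : _ + 1 + _ - 1 = q * (farey_N Q)%:Z + r%:Z); last by ring.
have N_neq0 : (farey_N Q)%:Z != 0 by rewrite eqz_nat -lt0n (leq_ltn_trans _ rN).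
have r_in : 0 <= r%:Z < farey_N Q by rewrite lez_nat ltz_nat rN.
by rewrite modzMDl divzMDl // modz_small // divz_small ?absz_nat // addr0.
Qed.

Lemma qdet_gamma_succ Q m : (0 < Q)%N -> qdet (gamma Q m) (gamma Q (m + 1)) = 1.
Proof.
move=> Q_gt0; have N_gt0 := farey_size_gt0 _ Q_gt0.
set N := farey_N Q.
have [r rN [q ->]] : exists2 r : nat, (r < N)%N & exists q, m = r%:Z + 1 + q * N%:Z.
  exists `|((m - 1) %% N)%Z|%N; last exists ((m - 1) %/ N)%Z.
    by rewrite -ltz_nat gez0_abs ?modz_ge0 ?ltz_pmod ?gt_eqF ?ltz_nat.
  rewrite gez0_abs ?modz_ge0 ?gt_eqF ?ltz_nat //.
  by have := divz_eq (m - 1) N; lia.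
rewrite gamma_nth_addz //; have [rN1 | rN1] := ltnP r.+1 N.
  rewrite (_ : _ + 1 = r.+1%:Z + 1 + q * N%:Z); last by lia.
  by rewrite gamma_nth_addz // qdet_addz qdet_farey_succ.
have r_last : r = N.-1 by lia.
rewrite (_ : _ + 1 = 0%:Z + 1 + (q + 1) * N%:Z); last by rewrite r_last; nia.
rewrite gamma_nth_addz // r_last farey_last // rmorphD /= [q%:~R + _]addrC addrA.
by rewrite qdet_addz -[X in qdet X _]add0r (qdet_addz 0 _ 1) qdet0_farey_head.
Qed.

Theorem lemma1 (Q : nat) (i : int) (k : nat) :
  (2 <= Q)%N -> (3 <= k)%N ->
  nu Q k.-1 i * nu Q k.-1 (i + 1) - nu Q k i * nu Q k.-2 (i + 1) = 1.
Proof.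
move=> Q_ge2 k_ge3; have Q_gt0 : (0 < Q)%N by lia.
have nuE k' j : nu Q k' j = qdet (gamma Q (j - 1)) (gamma Q (j + k'%:Z - 1)) by [].
rewrite !nuE; set a := i - 1; set c := i + k%:Z - 2.
rewrite (_ : i + 1 - 1 = a + 1); last by rewrite /a; lia.
rewrite (_ : i + k.-1%:Z - 1 = c); last by rewrite /c; lia.
rewrite (_ : i + 1 + k.-2%:Z - 1 = c); last by rewrite /c; lia.
rewrite (_ : i + 1 + k.-1%:Z - 1 = c + 1); last by rewrite /c; lia.
rewrite (_ : i + k%:Z - 1 = c + 1); last by rewrite /c; lia.
by rewrite qdet_plucker !qdet_gamma_succ.
Qed.
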